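(* Let $a>0$, let $v:\mathbb{R}\to[v_0,\infty)$ be continuously differentiable with $v_0>0$, fix $r>a/v_0$, let $C=C([-r,0],\mathbb{R})$ with the maximum norm and $C^1=C^1([-r,0],\mathbb{R})$ with the norm $|\phi|_1=\max|\phi|+\max|\phi'|$. Let $\delta:C\to(0,r)$ be the map assigning to $\phi\in C$ the unique $u\in(0,r)$ with $a=\int_{-u}^0 v(\phi(s))\,ds$; it is continuously differentiable with derivative $D\delta(\phi)\chi=-\int_{-\delta(\phi)}^0 v'(\phi(s))\chi(s)\,ds\,/\,v(\phi(-\delta(\phi)))$. For $\phi\in C^1$ and $\chi\in C$ define $$D_eE(\phi)\chi=\chi(-\delta(\phi))-\phi'(-\delta(\phi))\,D\delta(\phi)\chi .$$ Then the map $C^1\times C\ni(\phi,\chi)\mapsto D_eE(\phi)\chi\in\mathbb{R}$ is continuous.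
   Context: $D_eE(\phi):C\to\mathbb{R}$ is the linear extension to $C$ of the derivative of the continuously differentiable map $E:C^1\to\mathbb{R}$, $E(\phi)=\phi(-\delta(\phi))$. *)

From Stdlib Require Import Reals Lra.
From Coquelicot Require Import Coquelicot.
Open Scope R_scope.

Definition supnorm (r : R) (f : R -> R) : R :=
  real (Lub_Rbar (fun y => exists s, -r <= s <= 0 /\ y = Rabs (f s))).

Definition c1norm (r : R) (f : R -> R) : R :=
  supnorm r f + supnorm r (Derive f).

(* Elements of C([-r,0],R), represented by continuous functions R -> R
   (every element of C([-r,0]) extends to one; only restrictions matter). *)
Definition isC (f : R -> R) : Prop := forall s, continuous f s.

Definition isC1 (f : R -> R) : Prop :=
  (forall s, ex_derive f s) /\ (forall s, continuous (Derive f) s).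

Definition Ddelta (v : R -> R) (delta : (R -> R) -> R) (phi chi : R -> R) : R :=
  - RInt (fun s => Derive v (phi s) * chi s) (- delta phi) 0 / v (phi (- delta phi)).

Definition DeE (v : R -> R) (delta : (R -> R) -> R) (phi chi : R -> R) : R :=
  chi (- delta phi) - Derive phi (- delta phi) * Ddelta v delta phi chi.

From Stdlib Require Import Reals Lra.
From Coquelicot Require Import Coquelicot.
Open Scope R_scope.

(* Since v >= v0 > 0, the equation defining delta gives
     v0 |delta psi - delta phi| <= |int_(-delta psi)^(-delta phi) v(psi)|
                                 = |int_(-delta phi)^0 (v(phi) - v(psi))|,
   so delta is continuous for uniform convergence on [-r,0].  Closeness in
   C^1 x C makes psi, psi' and omega uniformly close to phi, phi' and chi on
   [-r,0]; evaluating uniformly convergent functions at the convergent point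
   -delta psi, and integrating them over the convergent interval
   [-delta psi, 0], every ingredient of D_eE(psi) omega converges to the
   corresponding one of D_eE(phi) chi. *)

Lemma segment_sub (a b x y s : R) :
  a <= x <= b -> a <= y <= b -> Rmin x y <= s <= Rmax x y -> a <= s <= b.
Proof. unfold Rmin, Rmax. destruct (Rle_dec x y); lra. Qed.

Lemma continuous_bounded_on (g : R -> R) (a b : R) :
  a <= b -> (forall s, a <= s <= b -> continuous g s) ->
  exists M, 0 <= M /\ forall s, a <= s <= b -> Rabs (g s) <= M.
Proof.
  intros Hab Hg.
  destruct (continuity_ab_maj (fun s => Rabs (g s)) a b Hab) as [c [Hc _]].
  { intros s Hs. apply continuity_pt_filterlim, continuous_Rabs_comp, Hg, Hs. }
  exists (Rabs (g c)). split; [apply Rabs_pos | exact Hc].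
Qed.

Section IntegralsOnSegment.

Variables (a b : R) (f : R -> R).
Hypothesis f_cont : forall s, a <= s <= b -> continuous f s.

Lemma ex_RInt_continuous_on (x y : R) : a <= x <= b -> a <= y <= b -> ex_RInt f x y.
Proof.
  intros Hx Hy. apply (ex_RInt_continuous (V := R_CompleteNormedModule)).
  intros s Hs. apply f_cont, (segment_sub a b x y s Hx Hy Hs).
Qed.

Lemma RInt_Chasles_on (x y z : R) : a <= x <= b -> a <= y <= b -> a <= z <= b ->
  RInt f x y + RInt f y z = RInt f x z.
Proof.
  intros Hx Hy Hz.
  apply (RInt_Chasles (V := R_CompleteNormedModule)); now apply ex_RInt_continuous_on.
Qed.

Lemma Rabs_RInt_le_const (x y M : R) : a <= x <= b -> a <= y <= b ->
  (forall s, a <= s <= b -> Rabs (f s) <= M) ->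
  Rabs (RInt f x y) <= Rabs (y - x) * M.
Proof.
  intros Hx Hy HM. apply (norm_RInt_le_const_abs f x y).
  - intros s Hs. apply HM, (segment_sub a b x y s Hx Hy Hs).
  - apply (RInt_correct (V := R_CompleteNormedModule)), ex_RInt_continuous_on; assumption.
Qed.

Lemma Rabs_RInt_ge_const (x y m : R) : a <= x <= b -> a <= y <= b ->
  (forall s, a <= s <= b -> m <= f s) ->
  m * Rabs (y - x) <= Rabs (RInt f x y).
Proof.
  intros Hx Hy Hm.
  assert (Hle : forall u w, a <= u <= b -> a <= w <= b -> u <= w ->
            m * Rabs (w - u) <= Rabs (RInt f u w)).
  { intros u w Hu Hw Huw. rewrite Rabs_right by lra.
    eapply Rle_trans; [| apply Rle_abs].
    replace (m * (w - u)) with (RInt (fun _ => m) u w)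
      by (rewrite RInt_const; apply Rmult_comm).
    apply RInt_le; [lra | apply ex_RInt_const | apply ex_RInt_continuous_on; auto |].
    intros s Hs. apply Hm. lra. }
  destruct (Rle_or_lt x y) as [Hxy | Hyx]; [now apply Hle |].
  rewrite <- opp_RInt_swap by (apply ex_RInt_continuous_on; assumption).
  rewrite Rabs_minus_sym. change (opp (RInt f y x)) with (- RInt f y x).
  rewrite Rabs_Ropp. apply Hle; auto; lra.
Qed.

End IntegralsOnSegment.

Lemma RInt_minus_on (a b : R) (f g : R -> R) (x y : R) :
  (forall s, a <= s <= b -> continuous f s) -> (forall s, a <= s <= b -> continuous g s) ->
  a <= x <= b -> a <= y <= b ->
  RInt (fun s => f s - g s) x y = RInt f x y - RInt g x y.
Proof.
  intros Hf Hg Hx Hy.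
  apply (RInt_minus (V := R_CompleteNormedModule)); now apply ex_RInt_continuous_on with a b.
Qed.

Lemma supnorm_ge (r : R) (g : R -> R) : 0 <= r ->
  (forall s, -r <= s <= 0 -> continuous g s) ->
  forall s, -r <= s <= 0 -> Rabs (g s) <= supnorm r g.
Proof.
  intros Hr Hg s Hs.
  destruct (continuous_bounded_on g (-r) 0) as [M [_ HM]]; [lra | exact Hg |].
  unfold supnorm.
  set (S := fun y => exists t, -r <= t <= 0 /\ y = Rabs (g t)).
  destruct (Lub_Rbar_correct S) as [Hub Hlub].
  assert (H1 : Rbar_le (Rabs (g s)) (Lub_Rbar S)) by (apply Hub; exists s; auto).
  assert (H2 : Rbar_le (Lub_Rbar S) M) by (apply Hlub; intros y [t [Ht ->]]; apply HM, Ht).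
  destruct (Lub_Rbar S); simpl in *; easy.
Qed.

Section FilterArithmetic.

Context {T : Type} {F : (T -> Prop) -> Prop} {FF : Filter F}.

Lemma filterlim_Rplus (f g : T -> R) (l m : R) :
  filterlim f F (locally l) -> filterlim g F (locally m) ->
  filterlim (fun p => f p + g p) F (locally (l + m)).
Proof.
  intros Hf Hg. apply (filterlim_comp_2 f g Rplus Hf Hg).
  apply (filterlim_plus (K := R_AbsRing) (V := R_NormedModule)).
Qed.

Lemma filterlim_Ropp (f : T -> R) (l : R) :
  filterlim f F (locally l) -> filterlim (fun p => - f p) F (locally (- l)).
Proof.
  intros Hf. apply (filterlim_comp _ _ _ f Ropp F (locally l) (locally (- l)) Hf).
  apply (filterlim_opp (K := R_AbsRing) (V := R_NormedModule)).
Qed.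

Lemma filterlim_Rminus (f g : T -> R) (l m : R) :
  filterlim f F (locally l) -> filterlim g F (locally m) ->
  filterlim (fun p => f p - g p) F (locally (l - m)).
Proof. intros Hf Hg. apply filterlim_Rplus; [exact Hf | now apply filterlim_Ropp]. Qed.

Lemma filterlim_Rmult (f g : T -> R) (l m : R) :
  filterlim f F (locally l) -> filterlim g F (locally m) ->
  filterlim (fun p => f p * g p) F (locally (l * m)).
Proof.
  intros Hf Hg. apply (filterlim_comp_2 f g Rmult Hf Hg).
  apply (filterlim_mult (K := R_AbsRing)).
Qed.

Lemma filterlim_Rinv (f : T -> R) (l : R) : l <> 0 ->
  filterlim f F (locally l) -> filterlim (fun p => / f p) F (locally (/ l)).
Proof.
  intros Hl Hf. apply (filterlim_comp _ _ _ f Rinv F (locally l) (locally (/ l)) Hf).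
  apply (filterlim_Rbar_inv (Finite l)). intros H; apply Hl; injection H; auto.
Qed.

End FilterArithmetic.

Section UniformConvergence.

Context {T : Type} (F : (T -> Prop) -> Prop) {FF : Filter F}.
Variables (a b : R).

Definition unif_cvg_on (f : T -> R -> R) (g : R -> R) : Prop :=
  forall e, 0 < e -> F (fun p => forall s, a <= s <= b -> Rabs (f p s - g s) < e).

Lemma unif_cvg_on_eval (f : T -> R -> R) (g : R -> R) (x : T -> R) (l : R) :
  unif_cvg_on f g -> filterlim x F (locally l) -> F (fun p => a <= x p <= b) ->
  continuous g l -> filterlim (fun p => f p (x p)) F (locally (g l)).
Proof.
  intros Hfg Hx Hxab Hg. apply filterlim_locally. intros e.
  pose proof (proj1 (filterlim_locally _ _)
                (filterlim_comp _ _ _ x g F (locally l) (locally (g l)) Hx Hg)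
                (pos_div_2 e)) as Hgx.
  apply filter_imp
    with (2 := filter_and _ _ (filter_and _ _ Hxab Hgx) (Hfg _ (cond_pos (pos_div_2 e)))).
  intros p [[Hp Hgp] Hf]. specialize (Hf _ Hp). simpl in Hf.
  change (Rabs (g (x p) - g l) < e / 2) in Hgp.
  change (Rabs (f p (x p) - g l) < e).
  replace (f p (x p) - g l) with ((f p (x p) - g (x p)) + (g (x p) - g l)) by ring.
  eapply Rle_lt_trans; [apply Rabs_triang | lra].
Qed.

Lemma RInt_lower_limit_cvg (h : T -> R -> R) (g : R -> R) (x : T -> R) (l m : R) :
  0 < m ->
  F (fun p => forall s, a <= s <= b -> continuous (h p) s /\ m <= h p s) ->
  (forall s, a <= s <= b -> continuous g s) ->
  unif_cvg_on h g ->
  F (fun p => a <= x p <= b /\ RInt (h p) (x p) b = RInt g l b) ->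
  a <= l <= b ->
  filterlim x F (locally l).
Proof.
  intros Hm Hh Hg Hhg Hx Hl. apply filterlim_locally. intros e.
  assert (He' : 0 < m * e / (b - a + 1))
    by (apply Rdiv_lt_0_compat; [apply Rmult_lt_0_compat; [lra | apply cond_pos] | lra]).
  apply filter_imp with (2 := filter_and _ _ (filter_and _ _ Hh Hx) (Hhg _ He')).
  intros p [[Hhp [Hxp HI]] Hu]. change (Rabs (x p - l) < e).
  assert (Hhp_cont : forall s, a <= s <= b -> continuous (h p) s)
    by (intros s Hs; apply Hhp, Hs).
  assert (Hpiece : RInt (h p) (x p) l = RInt (fun s => g s - h p s) l b).
  { rewrite (RInt_minus_on a b), <- HI, <- (RInt_Chasles_on a b (h p) Hhp_cont (x p) l b);
      auto; lra. }
  assert (Lo : m * Rabs (l - x p) <= Rabs (RInt (h p) (x p) l))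
    by (apply Rabs_RInt_ge_const with a b; auto; intros s Hs; apply Hhp, Hs).
  assert (Up : Rabs (RInt (fun s => g s - h p s) l b) <= Rabs (b - l) * (m * e / (b - a + 1))).
  { apply Rabs_RInt_le_const with a b; auto; [| lra |].
    - intros s Hs. apply (continuous_minus g (h p)); auto.
    - intros s Hs. rewrite Rabs_minus_sym. apply Rlt_le, Hu, Hs. }
  assert (Hbl : Rabs (b - l) * (m * e / (b - a + 1)) < m * e).
  { rewrite Rabs_right by lra.
    apply Rlt_le_trans with ((b - a + 1) * (m * e / (b - a + 1))).
    - apply Rmult_lt_compat_r; [exact He' | lra].
    - right. field. lra. }
  rewrite Rabs_minus_sym. apply (Rmult_lt_reg_l m); [exact Hm |].
  rewrite Hpiece in Lo. lra.
Qed.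

Hypothesis Hab : a <= b.

Lemma unif_cvg_on_comp (h : R -> R) (f : T -> R -> R) (g : R -> R) :
  (forall x, continuous h x) -> (forall s, a <= s <= b -> continuous g s) ->
  unif_cvg_on f g -> unif_cvg_on (fun p s => h (f p s)) (fun s => h (g s)).
Proof.
  intros Hh Hg Hfg e He.
  destruct (continuous_bounded_on g a b Hab Hg) as [M [_ HM]].
  destruct (@Heine_cor2 h (- (M + 1)) (M + 1)
              (fun x _ => proj2 (continuity_pt_filterlim h x) (Hh x)) (mkposreal e He))
    as [d Hd]; simpl in Hd.
  apply filter_imp with (2 := Hfg (Rmin 1 d) (Rmin_pos _ _ Rlt_0_1 (cond_pos d))).
  intros p Hp s Hs.
  specialize (Hp s Hs). specialize (HM s Hs).
  pose proof (Rmin_l 1 d). pose proof (Rmin_r 1 d).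
  apply Rabs_le_between in HM. apply Rabs_lt_between in Hp.
  apply Hd; [lra | lra | apply Rabs_lt_between; lra].
Qed.

Lemma unif_cvg_on_mult (f1 f2 : T -> R -> R) (g1 g2 : R -> R) :
  (forall s, a <= s <= b -> continuous g1 s) ->
  (forall s, a <= s <= b -> continuous g2 s) ->
  unif_cvg_on f1 g1 -> unif_cvg_on f2 g2 ->
  unif_cvg_on (fun p s => f1 p s * f2 p s) (fun s => g1 s * g2 s).
Proof.
  intros Hg1 Hg2 H1 H2 e He.
  destruct (continuous_bounded_on g1 a b Hab Hg1) as [M1 [HM1 HB1]].
  destruct (continuous_bounded_on g2 a b Hab Hg2) as [M2 [HM2 HB2]].
  set (e' := Rmin 1 (e / (M1 + M2 + 2))).
  assert (He' : 0 < e') by (apply Rmin_pos; [lra | apply Rdiv_lt_0_compat; lra]).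
  assert (He'e : e' * (M1 + M2 + 2) <= e).
  { apply (Rmult_le_reg_r (/ (M1 + M2 + 2))); [apply Rinv_0_lt_compat; lra |].
    rewrite Rmult_assoc, Rinv_r, Rmult_1_r by lra. apply Rmin_r. }
  apply filter_imp with (2 := filter_and _ _ (H1 e' He') (H2 e' He')).
  intros p [Hp1 Hp2] s Hs.
  specialize (Hp1 s Hs). specialize (Hp2 s Hs).
  specialize (HB1 s Hs). specialize (HB2 s Hs).
  assert (He'1 : e' <= 1) by apply Rmin_l.
  assert (Hf2 : Rabs (f2 p s) <= M2 + 1).
  { replace (f2 p s) with ((f2 p s - g2 s) + g2 s) by ring.
    eapply Rle_trans; [apply Rabs_triang | lra]. }
  replace (f1 p s * f2 p s - g1 s * g2 s)
    with ((f1 p s - g1 s) * f2 p s + g1 s * (f2 p s - g2 s)) by ring.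
  eapply Rle_lt_trans; [apply Rabs_triang |]. rewrite !Rabs_mult.
  assert (Q1 : Rabs (f1 p s - g1 s) * Rabs (f2 p s) <= e' * (M2 + 1))
    by (apply Rmult_le_compat; try apply Rabs_pos; lra).
  assert (Q2 : Rabs (g1 s) * Rabs (f2 p s - g2 s) <= M1 * e')
    by (apply Rmult_le_compat; try apply Rabs_pos; lra).
  nra.
Qed.

Lemma unif_cvg_on_RInt (f : T -> R -> R) (g : R -> R) (x : T -> R) (l : R) :
  F (fun p => forall s, a <= s <= b -> continuous (f p) s) ->
  (forall s, a <= s <= b -> continuous g s) ->
  unif_cvg_on f g -> filterlim x F (locally l) -> F (fun p => a <= x p <= b) ->
  a <= l <= b ->
  filterlim (fun p => RInt (f p) (x p) b) F (locally (RInt g l b)).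
Proof.
  intros Hf Hg Hfg Hx Hxab Hl. apply filterlim_locally. intros e.
  destruct (continuous_bounded_on g a b Hab Hg) as [M [HM HgM]].
  assert (He1 : 0 < e / (2 * (M + 1))) by (apply Rdiv_lt_0_compat; [apply cond_pos | lra]).
  set (e2 := Rmin 1 (e / (2 * (b - a + 1)))).
  assert (He2 : 0 < e2)
    by (apply Rmin_pos; [lra | apply Rdiv_lt_0_compat; [apply cond_pos | lra]]).
  pose proof (proj1 (filterlim_locally _ _) Hx (mkposreal _ He1)) as Hxl.
  apply filter_imp
    with (2 := filter_and _ _ (filter_and _ _ Hf Hxab) (filter_and _ _ Hxl (Hfg e2 He2))).
  intros p [[Hfp Hp] [Hxp Hu]].
  change (Rabs (x p - l) < e / (2 * (M + 1))) in Hxp.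
  change (Rabs (RInt (f p) (x p) b - RInt g l b) < e).
  assert (Hfg_cont : forall s, a <= s <= b -> continuous (fun s => f p s - g s) s)
    by (intros s Hs; apply (continuous_minus (f p) g); auto).
  assert (Hsplit : RInt (f p) (x p) b - RInt g l b
                   = RInt (f p) (x p) l + RInt (fun s => f p s - g s) l b).
  { rewrite (RInt_minus_on a b), <- (RInt_Chasles_on a b (f p) Hfp (x p) l b); auto; lra. }
  assert (B1 : Rabs (RInt (f p) (x p) l) <= Rabs (l - x p) * (M + 1)).
  { apply Rabs_RInt_le_const with a b; auto.
    intros s Hs. replace (f p s) with ((f p s - g s) + g s) by ring.
    eapply Rle_trans; [apply Rabs_triang |].
    assert (e2 <= 1) by apply Rmin_l.
    pose proof (Hu s Hs). pose proof (HgM s Hs). lra. }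
  assert (B2 : Rabs (RInt (fun s => f p s - g s) l b) <= Rabs (b - l) * e2).
  { apply Rabs_RInt_le_const with a b; auto; [lra |].
    intros s Hs. apply Rlt_le, Hu, Hs. }
  assert (T1 : Rabs (l - x p) * (M + 1) < e / 2).
  { rewrite Rabs_minus_sym.
    replace (e / 2) with (e / (2 * (M + 1)) * (M + 1)) by (field; lra).
    apply Rmult_lt_compat_r; lra. }
  assert (T2 : Rabs (b - l) * e2 <= e / 2).
  { rewrite Rabs_right by lra.
    apply Rle_trans with ((b - a + 1) * (e / (2 * (b - a + 1)))).
    - apply Rmult_le_compat; [lra | lra | lra | apply Rmin_r].
    - right. field. lra. }
  rewrite Hsplit. eapply Rle_lt_trans; [apply Rabs_triang | lra].
Qed.

End UniformConvergence.

Lemma isC1_C (f : R -> R) : isC1 f -> isC f.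
Proof. intros [Hd _] x. apply (ex_derive_continuous (K := R_AbsRing) (V := R_NormedModule)), Hd. Qed.

Lemma isC_comp (h f : R -> R) : (forall x, continuous h x) -> isC f -> isC (fun s => h (f s)).
Proof. intros Hh Hf s. apply continuous_comp; auto. Qed.

Lemma isC_mult (f g : R -> R) : isC f -> isC g -> isC (fun s => f s * g s).
Proof. intros Hf Hg s. apply (continuous_mult (K := R_AbsRing)); auto. Qed.

Lemma Derive_minus_isC1 (f g : R -> R) (s : R) : isC1 f -> isC1 g ->
  Derive (fun t => f t - g t) s = Derive f s - Derive g s.
Proof. intros [Hf _] [Hg _]. apply Derive_minus; auto. Qed.

Lemma isC1_minus (f g : R -> R) : isC1 f -> isC1 g -> isC1 (fun s => f s - g s).
Proof.
  intros Hf Hg. split.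
  - intros s. apply (ex_derive_minus (K := R_AbsRing) (V := R_NormedModule));
      [apply Hf | apply Hg].
  - intros s. apply continuous_ext with (f := fun t => Derive f t - Derive g t).
    + intros t. symmetry. now apply Derive_minus_isC1.
    + apply (continuous_minus (Derive f) (Derive g)); [apply Hf | apply Hg].
Qed.

Lemma c1norm_ge (r : R) (f : R -> R) : 0 <= r -> isC1 f ->
  forall s, -r <= s <= 0 -> Rabs (f s) <= c1norm r f /\ Rabs (Derive f s) <= c1norm r f.
Proof.
  intros Hr Hf s Hs. unfold c1norm.
  assert (Hf0 : Rabs (f s) <= supnorm r f)
    by (apply supnorm_ge; auto; intros t _; now apply isC1_C).
  assert (Hdf0 : Rabs (Derive f s) <= supnorm r (Derive f))
    by (apply supnorm_ge; auto; intros t _; apply Hf).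
  assert (0 <= supnorm r f).
  { apply Rle_trans with (Rabs (f 0)); [apply Rabs_pos |].
    apply supnorm_ge; auto; [intros t _; now apply isC1_C | lra]. }
  assert (0 <= supnorm r (Derive f)).
  { apply Rle_trans with (Rabs (Derive f 0)); [apply Rabs_pos |].
    apply supnorm_ge; auto; [intros t _; apply Hf | lra]. }
  lra.
Qed.

Definition C1xC_nbhs (r : R) (phi chi : R -> R) (P : (R -> R) * (R -> R) -> Prop) : Prop :=
  exists eta, 0 < eta /\ forall psi omega, isC1 psi -> isC omega ->
    c1norm r (fun s => psi s - phi s) < eta ->
    supnorm r (fun s => omega s - chi s) < eta -> P (psi, omega).

#[global] Instance C1xC_nbhs_filter (r : R) (phi chi : R -> R) : Filter (C1xC_nbhs r phi chi).
Proof.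
  constructor.
  - exists 1. split; [lra | auto].
  - intros P Q [e1 [He1 H1]] [e2 [He2 H2]]. exists (Rmin e1 e2). split.
    + now apply Rmin_pos.
    + intros psi omega Hpsi Homega Hd1 Hd2.
      pose proof (Rmin_l e1 e2). pose proof (Rmin_r e1 e2).
      split; [apply H1 | apply H2]; auto; lra.
  - intros P Q HPQ [e [He H]]. exists e. split; auto.
Qed.

Lemma C1xC_nbhs_isC (r : R) (phi chi : R -> R) :
  C1xC_nbhs r phi chi (fun p => isC1 (fst p) /\ isC (snd p)).
Proof. exists 1. split; [lra | auto]. Qed.

Lemma C1xC_nbhs_unif_cvg (r : R) (phi chi : R -> R) : 0 <= r -> isC1 phi -> isC chi ->
  unif_cvg_on (C1xC_nbhs r phi chi) (-r) 0 (fun p => fst p) phi /\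
  unif_cvg_on (C1xC_nbhs r phi chi) (-r) 0 (fun p => Derive (fst p)) (Derive phi) /\
  unif_cvg_on (C1xC_nbhs r phi chi) (-r) 0 (fun p => snd p) chi.
Proof.
  intros Hr Hphi Hchi. repeat split; intros e He; exists e; split; auto;
    intros psi omega Hpsi Homega H1 H2 s Hs; simpl.
  - apply Rle_lt_trans with (2 := H1), (c1norm_ge r _ Hr (isC1_minus _ _ Hpsi Hphi) s Hs).
  - rewrite <- Derive_minus_isC1 by assumption.
    apply Rle_lt_trans with (2 := H1), (c1norm_ge r _ Hr (isC1_minus _ _ Hpsi Hphi) s Hs).
  - apply Rle_lt_trans with (2 := H2), (supnorm_ge r (fun t => omega t - chi t)); auto.
    intros t _. now apply (continuous_minus omega chi).
Qed.

Lemma C1xC_nbhs_filterlim (r : R) (phi chi : R -> R) (G : (R -> R) * (R -> R) -> R) (l : R) :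
  filterlim G (C1xC_nbhs r phi chi) (locally l) ->
  forall eps, 0 < eps -> exists eta, 0 < eta /\
    forall psi omega, isC1 psi -> isC omega ->
      c1norm r (fun s => psi s - phi s) < eta ->
      supnorm r (fun s => omega s - chi s) < eta ->
      Rabs (G (psi, omega) - l) < eps.
Proof.
  intros HG eps Heps.
  exact (proj1 (filterlim_locally _ _) HG (mkposreal eps Heps)).
Qed.

Lemma delta_unif_cvg {T : Type} (F : (T -> Prop) -> Prop) {FF : Filter F}
  (a v0 r : R) (v : R -> R) (delta : (R -> R) -> R) (psi : T -> R -> R) (phi : R -> R) :
  0 < v0 -> (forall x, continuous v x) -> (forall x, v0 <= v x) ->
  (forall phi, isC phi ->
     0 < delta phi < r /\ RInt (fun s => v (phi s)) (- delta phi) 0 = a) ->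
  isC phi -> F (fun p => isC (psi p)) -> unif_cvg_on F (-r) 0 psi phi ->
  filterlim (fun p => - delta (psi p)) F (locally (- delta phi)).
Proof.
  intros Hv0 Hv Hvb Hdelta Hphi Hpsi Hcvg.
  destruct (Hdelta phi Hphi) as [Hd Hint].
  apply RInt_lower_limit_cvg
    with (a := -r) (b := 0) (h := fun p s => v (psi p s)) (g := fun s => v (phi s)) (m := v0);
    auto; try lra.
  - apply filter_imp with (2 := Hpsi). intros p Hp s _.
    split; [apply continuous_comp; auto | apply Hvb].
  - intros s _. apply continuous_comp; auto.
  - apply unif_cvg_on_comp; auto; lra.
  - apply filter_imp with (2 := Hpsi). intros p Hp.
    destruct (Hdelta _ Hp) as [Hdp Hintp]. split; [lra | congruence].
Qed.

Lemma RInt_Dv_mult_cvg {T : Type} (F : (T -> Prop) -> Prop) {FF : Filter F}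
  (r : R) (v : R -> R) (x : T -> R) (l : R) (psi omega : T -> R -> R) (phi chi : R -> R) :
  (forall y, continuous (Derive v) y) -> isC phi -> isC chi ->
  F (fun p => isC (psi p) /\ isC (omega p)) ->
  unif_cvg_on F (-r) 0 psi phi -> unif_cvg_on F (-r) 0 omega chi ->
  filterlim x F (locally l) -> F (fun p => -r <= x p <= 0) -> -r <= l <= 0 ->
  filterlim (fun p => RInt (fun s => Derive v (psi p s) * omega p s) (x p) 0) F
    (locally (RInt (fun s => Derive v (phi s) * chi s) l 0)).
Proof.
  intros Hv Hphi Hchi HC Hpsi Homega Hx Hxr Hl.
  apply unif_cvg_on_RInt with (a := -r) (b := 0); auto; [lra | | |].
  - apply filter_imp with (2 := HC). intros p [Hp Hq] s _.
    now apply isC_mult; [apply isC_comp |].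
  - intros s _. now apply isC_mult; [apply isC_comp |].
  - apply unif_cvg_on_mult; auto; [lra | intros s _; now apply isC_comp |].
    apply unif_cvg_on_comp; auto; lra.
Qed.

Lemma DeE_cvg {T : Type} (F : (T -> Prop) -> Prop) {FF : Filter F}
  (r : R) (v : R -> R) (delta : (R -> R) -> R) (psi omega : T -> R -> R) (phi chi : R -> R) :
  (forall x, continuous v x) -> (forall x, continuous (Derive v) x) ->
  v (phi (- delta phi)) <> 0 ->
  isC phi -> isC chi -> continuous (Derive phi) (- delta phi) ->
  F (fun p => isC (psi p) /\ isC (omega p)) ->
  unif_cvg_on F (-r) 0 psi phi ->
  unif_cvg_on F (-r) 0 (fun p => Derive (psi p)) (Derive phi) ->
  unif_cvg_on F (-r) 0 omega chi ->
  filterlim (fun p => - delta (psi p)) F (locally (- delta phi)) ->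
  F (fun p => -r <= - delta (psi p) <= 0) -> -r <= - delta phi <= 0 ->
  filterlim (fun p => DeE v delta (psi p) (omega p)) F (locally (DeE v delta phi chi)).
Proof.
  intros Hv Hdv Hv0 Hphi Hchi Hdphi HC Hpsi Hdpsi Homega Hdelta Hrange Hd.
  unfold DeE, Ddelta, Rdiv.
  apply filterlim_Rminus; [now apply unif_cvg_on_eval with (a := -r) (b := 0) |].
  apply filterlim_Rmult;
    [now apply unif_cvg_on_eval with (a := -r) (b := 0) (f := fun p => Derive (psi p)) |].
  apply filterlim_Rmult; [now apply filterlim_Ropp, (RInt_Dv_mult_cvg F r) |].
  apply filterlim_Rinv; [exact Hv0 |].
  apply unif_cvg_on_eval
    with (a := -r) (b := 0) (f := fun p s => v (psi p s)) (g := fun s => v (phi s)); auto.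
  - apply unif_cvg_on_comp; auto; lra.
  - now apply isC_comp.
Qed.

Theorem proposition2p2
  (a v0 r : R) (v : R -> R) (delta : (R -> R) -> R)
  (ha : 0 < a) (hv0 : 0 < v0)
  (hvd : forall x, ex_derive v x)
  (hvc : forall x, continuous (Derive v) x)
  (hvb : forall x, v0 <= v x)
  (hr : a / v0 < r)
  (hdelta : forall phi, isC phi ->
     0 < delta phi < r /\ RInt (fun s => v (phi s)) (- delta phi) 0 = a) :
  forall phi chi, isC1 phi -> isC chi ->
  forall eps, 0 < eps -> exists eta, 0 < eta /\
    forall psi omega, isC1 psi -> isC omega ->
      c1norm r (fun s => psi s - phi s) < eta ->
      supnorm r (fun s => omega s - chi s) < eta ->
      Rabs (DeE v delta psi omega - DeE v delta phi chi) < eps.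
Proof.
  intros phi chi Hphi Hchi.
  assert (Hv : forall x, continuous v x)
    by (intros x; apply (ex_derive_continuous (K := R_AbsRing) (V := R_NormedModule)), hvd).
  pose proof (isC1_C _ Hphi) as HphiC.
  destruct (hdelta phi HphiC) as [Hd _].
  set (F := C1xC_nbhs r phi chi).
  assert (FF : Filter F) by apply C1xC_nbhs_filter.
  assert (HC : F (fun p => isC (fst p) /\ isC (snd p))).
  { apply filter_imp with (2 := C1xC_nbhs_isC r phi chi).
    intros p [Hp Hq]. split; [now apply isC1_C | exact Hq]. }
  destruct (C1xC_nbhs_unif_cvg r phi chi ltac:(lra) Hphi Hchi) as [Upsi [Udpsi Uomega]].
  assert (Hrange : F (fun p => -r <= - delta (fst p) <= 0)).
  { apply filter_imp with (2 := HC). intros p [Hp _].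
    destruct (hdelta _ Hp) as [Hdp _]. lra. }
  apply (C1xC_nbhs_filterlim r phi chi (fun p => DeE v delta (fst p) (snd p))).
  apply (DeE_cvg F r); auto; try lra.
  - specialize (hvb (phi (- delta phi))). lra.
  - apply Hphi.
  - apply (delta_unif_cvg F a v0 r v delta (fun p => fst p)); auto.
    apply filter_imp with (2 := HC). now intros p [].
Qed.
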